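(* Let $G\in L^\infty_{q\times p}$ and let $\mathcal M$ be a closed subspace of $H^2_p$ with $S^*\mathcal M\subset\mathcal M$ and $\ker S^*\subset\mathcal M$. Assume $D^\circ_{\mathcal M}$ is invertible. Then the range $\mathcal F$ of $D_{\mathcal M}Q_{\mathcal M}$ is closed, and the orthogonal projection of $H^2_p$ onto $\mathcal F$ is $P_{\mathcal F}=D_{\mathcal M}Q_{\mathcal M}(D^\circ_{\mathcal M})^{-2}Q_{\mathcal M}^*D_{\mathcal M}$.
   Context: $H:H^2_p\to K^2_q$, $Hf=P_-(Gf)$, with $P_-$ the orthogonal projection of $L^2_q$ onto $K^2_q=L^2_q\ominus H^2_q$; $S$ forward shift on $H^2_p$; $P_{\mathcal M}$ orthogonal projection onto $\mathcal M$; $R_{\mathcal M}$ orthogonal projection onto $S^*\mathcal M$; $Q_{\mathcal M}=SR_{\mathcal M}$; $\gamma_{\mathcal M}=\|H|_{\mathcal M}\|$; $D_{\mathcal M}=(\gamma_{\mathcal M}^2I-P_{\mathcal M}H^*HP_{\mathcal M})^{1/2}$; $D^\circ_{\mathcal M}=(\gamma_{\mathcal M}^2I-S^*P_{\mathcal M}H^*HP_{\mathcal M}S)^{1/2}$. *)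

From mathcomp Require Import all_boot all_order all_algebra.
From mathcomp Require Import complex.
From mathcomp Require Import all_classical all_reals all_analysis.
Import Order.TTheory GRing.Theory Num.Theory numFieldNormedType.Exports.

Set Implicit Arguments.
Unset Strict Implicit.
Unset Printing Implicit Defensive.

Local Open Scope ring_scope.
Local Open Scope classical_set_scope.

(* Model: H^2_p is identified, via Taylor/Fourier coefficients,
   with l^2(N; C^p): f(z) = sum_k x_k z^k.  K^2_q = L^2_q (-) H^2_q is
   identified with l^2(N; C^q) via y_k = coefficient of z^{-k-1}.
   Operators are functions on all sequences, constrained only on l^2. *)

Section Defs.
Variable R : realType.
Local Notation C := R[i].

Definition seqv (n : nat) := nat -> 'cV[C]_n.

Definition cabs2 (z : C) : R := complex.Re z ^+ 2 + complex.Im z ^+ 2.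
Definition vnorm2 n (v : 'cV[C]_n) : R := \sum_(i < n) cabs2 (v i 0).

Definition l2 n (x : seqv n) : Prop := cvgn (series (fun k => vnorm2 (x k))).
Definition l2norm2 n (x : seqv n) : R := limn (series (fun k => vnorm2 (x k))).
Definition l2norm n (x : seqv n) : R := Num.sqrt (l2norm2 x).

Definition szero n : seqv n := fun _ => 0.
Definition sadd n (x y : seqv n) : seqv n := fun k => x k + y k.
Definition sscale n (a : C) (x : seqv n) : seqv n := fun k => a *: x k.
Definition ssub n (x y : seqv n) : seqv n := fun k => x k - y k.

(* inner product <x,y> (linear in x, conjugate-linear in y), written by the
   polarization identity <x,y> = 1/4 sum_{k=0}^3 i^k ||x + i^k y||^2,
   which equals sum_n y_n^* x_n on l^2. *)
Definition inner n (x y : seqv n) : C :=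
  4%:R^-1 * \sum_(k < 4) ('i ^+ k * (l2norm2 (sadd x (sscale ('i ^+ k) y)))%:C%C).

Definition maps_l2 m n (T : seqv m -> seqv n) := forall x, l2 x -> l2 (T x).

Definition bounded_linear m n (T : seqv m -> seqv n) :=
  [/\ maps_l2 T,
      (forall a x y, l2 x -> l2 y ->
         T (sadd (sscale a x) y) = sadd (sscale a (T x)) (T y))
    & exists c : R, forall x, l2 x -> l2norm (T x) <= c * l2norm x].

Definition is_adjoint m n (T : seqv m -> seqv n) (Ts : seqv n -> seqv m) :=
  maps_l2 Ts /\ forall x y, l2 x -> l2 y -> inner (T x) y = inner x (Ts y).

Definition subspace n (M : set (seqv n)) :=
  [/\ forall x, M x -> l2 x, M (@szero n)
    & forall a x y, M x -> M y -> M (sadd (sscale a x) y)].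

Definition l2closed n (M : set (seqv n)) :=
  forall (u : nat -> seqv n) (x : seqv n), (forall k, M (u k)) -> l2 x ->
    (fun k => l2norm (ssub (u k) x)) @ \oo --> 0 -> M x.

Definition closed_subspace n (M : set (seqv n)) := subspace M /\ l2closed M.

Definition is_orth_proj n (M : set (seqv n)) (P : seqv n -> seqv n) :=
  forall x, l2 x -> M (P x) /\ forall m, M m -> inner (ssub x (P x)) m = 0.

Definition fshift n (x : seqv n) : seqv n :=
  fun k => if k is k'.+1 then x k' else 0.
Definition bshift n (x : seqv n) : seqv n := fun k => x k.+1.

(* unit circle parametrised by t in [0, 2 pi], with Lebesgue measure *)
Definition circ : set R := [set t | 0 <= t <= 2 * pi].

Definition Linf q p (G : R -> 'M[C]_(q, p)) :=
  forall a b,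
  [/\ measurable_fun circ (fun t => complex.Re (G t a b)),
      measurable_fun circ (fun t => complex.Im (G t a b))
    & exists B : R,
        \forall t \ae (@lebesgue_measure R), circ t -> cabs2 (G t a b) <= B].

(* Fourier coefficient hat G(k) = 1/(2pi) int_0^{2pi} G(e^{it}) e^{-ikt} dt *)
Definition fcoef q p (G : R -> 'M[C]_(q, p)) (k : int) : 'M[C]_(q, p) :=
  \matrix_(a, b)
    Complex
      ((2 * pi)^-1 * Rintegral (@lebesgue_measure R) circ
         (fun t => complex.Re (G t a b) * cos (k%:~R * t)
                 + complex.Im (G t a b) * sin (k%:~R * t)))
      ((2 * pi)^-1 * Rintegral (@lebesgue_measure R) circ
         (fun t => complex.Im (G t a b) * cos (k%:~R * t)
                 - complex.Re (G t a b) * sin (k%:~R * t))).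

(* H f = P_-(G f): in coefficients, the coefficient of z^{-k-1} of G f is
   sum_j hat G(-k-j-1) x_j (series converging in C^q). *)
Definition is_hankel q p (G : R -> 'M[C]_(q, p)) (H : seqv p -> seqv q) :=
  forall x, l2 x -> forall k : nat,
    (fun N => vnorm2 (\sum_(j < N) fcoef G (- ((k + j + 1)%N)%:Z) *m x j - H x k))
      @ \oo --> 0.

Definition opnorm_on m n (M : set (seqv m)) (T : seqv m -> seqv n) : R :=
  sup [set l2norm (T x) | x in [set x | M x /\ l2norm x <= 1]].

Definition is_pos_sqrt n (D A : seqv n -> seqv n) :=
  [/\ bounded_linear D, (forall x, l2 x -> 0 <= inner (D x) x)
    & forall x, l2 x -> D (D x) = A x].

Definition is_inverse n (T E : seqv n -> seqv n) :=
  bounded_linear E /\ forall x, l2 x -> E (T x) = x /\ T (E x) = x.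

End Defs.

From Pilot Require Import Defs.
From mathcomp Require Import all_boot all_order all_algebra.
From mathcomp Require Import complex.
From mathcomp Require Import all_classical all_reals all_analysis.
From mathcomp Require Import ring lra.
Import Order.TTheory GRing.Theory Num.Theory numFieldNormedType.Exports.
Local Open Scope ring_scope.
Local Open Scope classical_set_scope.

(* D_M^2 = gamma^2 - P_M H^*H P_M is gamma^2 on the orthogonal complement of M and
   self-adjoint, so it leaves M invariant.  As ker S^* is contained in M, S S^* M is
   contained in M, hence (D°_M)^2 = S^* D_M^2 S leaves N = S^*M invariant, and then
   so does its inverse (D°_M)^-2.  Since Q_M^* = R_M S^*, for v in N this gives
   Q_M^* D_M^2 Q_M (D°_M)^-2 v = R_M (D°_M)^2 (D°_M)^-2 v = v.  Writing B = D_M Q_M,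
   this says B^* B (D°_M)^-2 B^* = B^*, which makes B (D°_M)^-2 B^* the orthogonal
   projection onto the range of B; and the range of an orthogonal projection is
   closed.

   The inner product of the model is defined by polarization, so its algebraic laws
   are derived from entrywise identities between squared norms, which pass to the
   limit in the series defining [l2norm2]. *)

Section Sequences.
Context {R : realType}.
Local Notation C := R[i].

Lemma cabs2_ge0 (z : C) : 0 <= cabs2 z.
Proof. by rewrite /cabs2 addr_ge0 // sqr_ge0. Qed.

Lemma cabs2_eq0 (z : C) : cabs2 z = 0 -> z = 0.
Proof.
case: z => a b; rewrite /cabs2 /= => /eqP.
rewrite paddr_eq0 ?sqr_ge0 // !sqrf_eq0 => /andP[/eqP-> /eqP->] //.
Qed.

Lemma cabs2D_le (u w : C) : cabs2 (u + w) <= 2 * cabs2 u + 2 * cabs2 w.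
Proof.
case: u => a b; case: w => c d; rewrite /cabs2 /= -subr_ge0.
have -> : 2 * (a ^+ 2 + b ^+ 2) + 2 * (c ^+ 2 + d ^+ 2) - ((a + c) ^+ 2 + (b + d) ^+ 2)
  = (a - c) ^+ 2 + (b - d) ^+ 2 by ring.
by rewrite addr_ge0 ?sqr_ge0.
Qed.

Lemma cabs2M (u w : C) : cabs2 (u * w) = cabs2 u * cabs2 w.
Proof. by case: u => a b; case: w => c d; rewrite /cabs2 /=; ring. Qed.

Lemma cplx_eq (z w : C) :
  complex.Re z = complex.Re w -> complex.Im z = complex.Im w -> z = w.
Proof. by case: z => a b; case: w => c d /= -> ->. Qed.

Lemma series_cst0 : series (fun _ : nat => 0 : R) = fun _ => 0.
Proof. by apply/funext => m; rewrite /series /= big1. Qed.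

Lemma cvg_seriesS (f : R ^nat) (L : R) :
  series f @ \oo --> L <-> series (fun k => f k.+1) @ \oo --> L - f 0%N.
Proof.
have e : series (fun k => f k.+1) = (fun m => series f m.+1 - f 0%N).
  by apply/funext => m; rewrite /series /= big_nat_recl //= addrC addKr.
rewrite e -(cvg_shiftS (series f)); split => [h|h]; first by apply: cvgB => //; exact: cvg_cst.
have -> : L = L - f 0%N + f 0%N by rewrite subrK.
have -> : (fun m => series f m.+1) = (fun m => series f m.+1 - f 0%N) + cst (f 0%N).
  by apply/funext => m /=; rewrite subrK.
by apply: cvgD => //; exact: cvg_cst.
Qed.

Context {n : nat}.
Local Notation sv := (seqv R n).

Lemma vnorm2_ge0 (v : 'cV[C]_n) : 0 <= vnorm2 v.
Proof. by rewrite /vnorm2 sumr_ge0 // => i _; exact: cabs2_ge0. Qed.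

Lemma vnorm2_eq0 (v : 'cV[C]_n) : vnorm2 v = 0 -> v = 0.
Proof.
move=> /eqP; rewrite /vnorm2 psumr_eq0 => [/allP h|i _]; last exact: cabs2_ge0.
apply/matrixP => i j; rewrite ord1 mxE; apply: cabs2_eq0.
by apply/eqP; apply: h; rewrite mem_index_enum.
Qed.

Lemma vnorm2_0 : vnorm2 (0 : 'cV[C]_n) = 0.
Proof. by rewrite /vnorm2 big1 // => i _; rewrite mxE /cabs2 /= expr0n /= addr0. Qed.

Lemma vnorm2_scaleD_le (a : C) (v w : 'cV[C]_n) :
  vnorm2 (a *: v + w) <= 2 * cabs2 a * vnorm2 v + 2 * vnorm2 w.
Proof.
rewrite /vnorm2 !mulr_sumr -big_split /=; apply: ler_sum => i _.
by rewrite !mxE -mulrA -cabs2M cabs2D_le.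
Qed.

Lemma l2_0 : l2 (@szero R n).
Proof.
rewrite /l2 /szero; under eq_fun do rewrite vnorm2_0.
by rewrite series_cst0; exact: is_cvg_cst.
Qed.

Lemma l2_scaleD (a : C) {x y : sv} : l2 x -> l2 y -> l2 (sadd (sscale a x) y).
Proof.
move=> hx hy; apply: (@series_le_cvg _ _
  ((2 * cabs2 a) *: (fun k => vnorm2 (x k)) + 2 *: (fun k => vnorm2 (y k)))).
- by move=> k; exact: vnorm2_ge0.
- by move=> k /=; rewrite addr_ge0 // mulr_ge0 ?vnorm2_ge0 ?mulr_ge0 ?cabs2_ge0.
- by move=> k; exact: vnorm2_scaleD_le.
- by apply: is_cvg_seriesD; apply: is_cvg_seriesZ.
Qed.

Lemma l2_scale (c : C) {x : sv} : l2 x -> l2 (sscale c x).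
Proof.
move=> hx; have := l2_scaleD c hx l2_0.
by congr l2; apply/funext => k; rewrite /sadd /szero addr0.
Qed.

Lemma l2_add {x y : sv} : l2 x -> l2 y -> l2 (sadd x y).
Proof.
move=> hx hy; have := l2_scaleD 1 hx hy.
by congr l2; apply/funext => k; rewrite /sadd /sscale scale1r.
Qed.

Lemma l2_sub {x y : sv} : l2 x -> l2 y -> l2 (ssub x y).
Proof.
move=> hx hy; have := l2_add hx (l2_scale (-1) hy).
by congr l2; apply/funext => k; rewrite /sadd /sscale /ssub scaleN1r.
Qed.

Lemma l2norm2_ge0 (x : sv) : l2 x -> 0 <= l2norm2 x.
Proof.
move=> hx; apply: limr_ge => //; apply: nearW => m.
by rewrite /series /= sumr_ge0 // => k _; exact: vnorm2_ge0.
Qed.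

Lemma vnorm2_le_l2norm2 (x : sv) k : l2 x -> vnorm2 (x k) <= l2norm2 x.
Proof.
move=> hx; apply: le_trans (nondecreasing_cvgn_le _ hx k.+1).
  by rewrite /series /= big_nat_recr //= lerDr sumr_ge0 // => j _; exact: vnorm2_ge0.
by apply: nondecreasing_series => j _ _; exact: vnorm2_ge0.
Qed.

Lemma l2norm2_eq0 (x : sv) : l2 x -> l2norm2 x = 0 -> x = @szero R n.
Proof.
move=> hx h0; apply/funext => k; apply: vnorm2_eq0; apply/eqP.
by rewrite eq_le vnorm2_ge0 andbT -h0 vnorm2_le_l2norm2.
Qed.

Lemma l2_bshift {x : sv} :
  l2 x -> l2 (bshift x) /\ l2norm2 x = vnorm2 (x 0%N) + l2norm2 (bshift x).
Proof.
move=> hx; have /cvg_seriesS h : series (fun k => vnorm2 (x k)) @ \oo --> l2norm2 x by [].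
have hb : l2 (bshift x) by apply/cvg_ex; eexists; exact: h.
by split => //; rewrite [l2norm2 (bshift x)](cvg_lim _ h) // addrC subrK.
Qed.

Lemma l2_fshift {x : sv} : l2 x -> l2 (fshift x).
Proof.
move=> hx; apply/cvg_ex; exists (l2norm2 x); apply/cvg_seriesS.
by rewrite /= vnorm2_0 subr0.
Qed.

End Sequences.

Section InnerProduct.
Context {R : realType} {n : nat}.
Local Notation C := R[i].
Local Notation sv := (seqv R n).

Fixpoint all_l2 (s : seq (R * sv)) : Prop :=
  if s is cf :: s' then l2 cf.2 /\ all_l2 s' else True.

Lemma l2norm2_lincomb (s : seq (R * sv)) : all_l2 s ->
  (forall k i, \sum_(cf <- s) cf.1 * cabs2 (cf.2 k i 0) = 0) ->
  \sum_(cf <- s) cf.1 * l2norm2 cf.2 = 0.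
Proof.
move=> hs h0.
have hcvg : series (fun k => \sum_(cf <- s) cf.1 * vnorm2 (cf.2 k)) @ \oo -->
            \sum_(cf <- s) cf.1 * l2norm2 cf.2.
  elim: s hs {h0} => [_|cf s IH [hcf hs]].
    under eq_fun do rewrite big_nil.
    by rewrite series_cst0 big_nil; exact: cvg_cst.
  have -> : (fun k => \sum_(c <- cf :: s) c.1 * vnorm2 (c.2 k)) =
      cf.1 *: (fun k => vnorm2 (cf.2 k)) + (fun k => \sum_(c <- s) c.1 * vnorm2 (c.2 k)).
    by apply/funext => k; rewrite big_cons.
  by rewrite big_cons seriesD seriesZ; apply: cvgD; [exact: cvgZ (cvg_cst _) _|exact: IH].
have h0s : (fun k => \sum_(cf <- s) cf.1 * vnorm2 (cf.2 k)) = fun _ => 0.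
  apply/funext => k; under eq_bigr do rewrite /vnorm2 mulr_sumr.
  by rewrite exchange_big /=; apply: big1 => i _; exact: h0.
by rewrite h0s series_cst0 in hcvg; rewrite -(cvg_lim _ hcvg) // lim_cst.
Qed.

(* Reified [sadd]/[sscale] expressions: their entries then compute by [cbn], whereas
   rewriting matrix entries under [sadd] with [mxE] is prohibitively slow. *)
Inductive lexpr := lvar of sv | ladd of lexpr & lexpr | lscale of C & lexpr.

Fixpoint leval (e : lexpr) : sv :=
  match e with
  | lvar x => x
  | ladd e1 e2 => sadd (leval e1) (leval e2)
  | lscale c e => sscale c (leval e)
  end.

Fixpoint lentry (e : lexpr) k i : C :=
  match e with
  | lvar x => x k i 0
  | ladd e1 e2 => lentry e1 k i + lentry e2 k i
  | lscale c e => c * lentry e k i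
  end.

Fixpoint lvars_l2 (e : lexpr) : Prop :=
  match e with
  | lvar x => l2 x
  | ladd e1 e2 => lvars_l2 e1 /\ lvars_l2 e2
  | lscale _ e => lvars_l2 e
  end.

Lemma leval_entry e k i : leval e k i 0 = lentry e k i.
Proof.
elim: e => [x|e1 IH1 e2 IH2|c e IH] //=; first by rewrite /sadd mxE IH1 IH2.
by rewrite /sscale mxE IH.
Qed.

Lemma l2_leval e : lvars_l2 e -> l2 (leval e).
Proof.
elim: e => [x|e1 IH1 e2 IH2|c e IH] //=; last by move=> /IH; exact: l2_scale.
by case=> /IH1 h1 /IH2 h2; exact: l2_add.
Qed.

Fixpoint all_lvars_l2 (s : seq (R * lexpr)) : Prop :=
  if s is ce :: s' then lvars_l2 ce.2 /\ all_lvars_l2 s' else True.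

Lemma l2norm2_lexpr_rel (s : seq (R * lexpr)) : all_lvars_l2 s ->
  (forall k i, \sum_(ce <- s) ce.1 * cabs2 (lentry ce.2 k i) = 0) ->
  \sum_(ce <- s) ce.1 * l2norm2 (leval ce.2) = 0.
Proof.
move=> hs h0; have := @l2norm2_lincomb [seq (ce.1, leval ce.2) | ce <- s].
rewrite big_map; apply.
  by elim: s hs {h0} => //= ce s IH [/l2_leval h1 /IH h2].
move=> k i; rewrite big_map -[RHS](h0 k i).
by elim: s {hs h0} => [|ce s IH]; rewrite ?big_nil // !big_cons /= leval_entry IH.
Qed.

Ltac reify_lexpr t :=
  lazymatch t with
  | sadd ?a ?b => let ra := reify_lexpr a in let rb := reify_lexpr b in constr:(ladd ra rb)
  | sscale ?c ?a => let ra := reify_lexpr a in constr:(lscale c ra)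
  | _ => constr:(lvar t)
  end.
Ltac reify_rel s :=
  lazymatch s with
  | nil => constr:(@nil (R * lexpr))
  | cons (?c, ?t) ?s' => let e := reify_lexpr t in let r := reify_rel s' in
                         constr:(cons (c, e) r)
  end.
Ltac l2norm2_rel s :=
  let r := reify_rel s in
  have := l2norm2_lexpr_rel r ltac:(cbn [all_lvars_l2 lvars_l2 snd]; repeat split; assumption)
    ltac:(move=> k i; rewrite !big_cons big_nil; cbn [fst snd lentry];
          repeat match goal with
          | |- context [ @fun_of_matrix _ _ _ (?x ?k) ?i ?j ] =>
            move: (@fun_of_matrix _ _ _ (x k) i j) => [? ?] end;
          rewrite -?complexiE /cabs2 /=; ring);
  rewrite !big_cons big_nil; cbn [fst snd leval].

Local Notation LL c x y := (l2norm2 (sadd x (sscale c y))).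

Lemma innerE (x y : sv) : inner x y =
  Complex ((LL 1 x y - LL (-1) x y) / 4%:R) ((LL 'i x y - LL (-'i) x y) / 4%:R).
Proof.
rewrite /inner !big_ord_recl big_ord0 !lift0; cbn [nat_of_ord ord0].
rewrite expr0 expr1 [_ ^+ 3]exprS sqr_i mulrN1 -complexiE.
move: (LL 1 x y) (LL (-1) x y) (LL 'i x y) (LL (-'i) x y) => a b c d.
rewrite -(rmorph_nat (real_complex R)) -fmorphV.
by apply: cplx_eq => /=; lra.
Qed.

Ltac solve_rel := repeat match goal with
  | |- context [ l2norm2 ?s ] => let L := fresh "L" in generalize (l2norm2 s); intro L end;
  move=> *; apply: cplx_eq => /=; lra.

Lemma inner_addl (x x' z : sv) : l2 x -> l2 x' -> l2 z ->
  inner (sadd x x') z = inner x z + inner x' z.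
Proof.
move=> hx hx' hz; rewrite !innerE.
l2norm2_rel ([:: (1, sadd (sadd x x') (sscale 1 z)); (-1, sadd (sadd x x') (sscale (-1) z));
   (-1, sadd x (sscale 1 z)); (1, sadd x (sscale (-1) z));
   (-1, sadd x' (sscale 1 z)); (1, sadd x' (sscale (-1) z))] : seq (R * sv)).
l2norm2_rel ([:: (1, sadd (sadd x x') (sscale 'i z)); (-1, sadd (sadd x x') (sscale (-'i) z));
   (-1, sadd x (sscale 'i z)); (1, sadd x (sscale (-'i) z));
   (-1, sadd x' (sscale 'i z)); (1, sadd x' (sscale (-'i) z))] : seq (R * sv)).
solve_rel.
Qed.

Lemma inner_scalel (a : C) (x z : sv) : l2 x -> l2 z ->
  inner (sscale a x) z = a * inner x z.
Proof.
move=> hx hz; rewrite !innerE; case: a => ar ai.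
l2norm2_rel ([:: (1, sadd (sscale (Complex ar ai) x) (sscale 1 z));
   (-1, sadd (sscale (Complex ar ai) x) (sscale (-1) z));
   (-ar, sadd x (sscale 1 z)); (ar, sadd x (sscale (-1) z));
   (ai, sadd x (sscale 'i z)); (-ai, sadd x (sscale (-'i) z))] : seq (R * sv)).
l2norm2_rel ([:: (1, sadd (sscale (Complex ar ai) x) (sscale 'i z));
   (-1, sadd (sscale (Complex ar ai) x) (sscale (-'i) z));
   (-ar, sadd x (sscale 'i z)); (ar, sadd x (sscale (-'i) z));
   (-ai, sadd x (sscale 1 z)); (ai, sadd x (sscale (-1) z))] : seq (R * sv)).
solve_rel.
Qed.

Lemma inner_conj (x y : sv) : l2 x -> l2 y -> inner y x = (inner x y)^*%C.
Proof.
move=> hx hy; rewrite !innerE.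
l2norm2_rel ([:: (1, sadd y (sscale 1 x)); (-1, sadd y (sscale (-1) x));
   (-1, sadd x (sscale 1 y)); (1, sadd x (sscale (-1) y))] : seq (R * sv)).
l2norm2_rel ([:: (1, sadd y (sscale 'i x)); (-1, sadd y (sscale (-'i) x));
   (1, sadd x (sscale 'i y)); (-1, sadd x (sscale (-'i) y))] : seq (R * sv)).
solve_rel.
Qed.

Lemma inner_self (x : sv) : l2 x -> inner x x = (l2norm2 x)%:C%C.
Proof.
move=> hx; rewrite !innerE.
l2norm2_rel ([:: (1, sadd x (sscale 1 x)); (-1, sadd x (sscale (-1) x)); (-4, x)]
  : seq (R * sv)).
l2norm2_rel ([:: (1, sadd x (sscale 'i x)); (-1, sadd x (sscale (-'i) x))] : seq (R * sv)).
solve_rel.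
Qed.

Lemma l2norm2_fshift_scaleD (c : C) (a b : sv) : l2 a -> l2 b -> cabs2 c = 1 ->
  LL c (fshift a) b = vnorm2 (b 0%N) + LL c a (bshift b).
Proof.
move=> ha hb hc; have hs : l2 (sadd (fshift a) (sscale c b)).
  by apply: l2_add; [exact: l2_fshift|exact: l2_scale].
rewrite (proj2 (l2_bshift hs)). congr (_ + _).
by apply: eq_bigr => i _; rewrite /sadd /sscale /fshift !mxE add0r cabs2M hc mul1r.
Qed.

Lemma inner_fshift (a b : sv) : l2 a -> l2 b -> inner (fshift a) b = inner a (bshift b).
Proof.
move=> ha hb; rewrite !innerE.
have unit_cabs2 (c : C) : c \in [:: 1; -1; 'i; -'i] -> cabs2 c = 1.
  by rewrite -complexiE !inE => /or4P[] /eqP->; rewrite /cabs2 /=; ring.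
have shift_rel (c : C) : c \in [:: 1; -1; 'i; -'i] -> _ :=
  fun hc => l2norm2_fshift_scaleD c _ _ ha hb (unit_cabs2 c hc).
move: (shift_rel 1) (shift_rel (-1)) (shift_rel 'i) (shift_rel (-'i)).
rewrite !inE !eqxx ?orbT => /(_ isT) + /(_ isT) + /(_ isT) + /(_ isT).
solve_rel.
Qed.

End InnerProduct.

(* Otherwise failing conversion checks (e.g. [assumption] inside [done]) unfold
   these limits of series. *)
Opaque inner l2norm2.

Section InnerProductTheory.
Context {R : realType} {n : nat}.
Local Notation C := R[i].
Local Notation sv := (seqv R n).

Lemma sadd_scaleN1 (x y : sv) : sadd (sscale (-1) y) x = ssub x y.
Proof. by apply/funext => k; rewrite /ssub /sadd /sscale scaleN1r addrC. Qed.

Lemma ssub_eq0 (x y : sv) : ssub x y = @szero R n -> x = y.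
Proof.
move=> h; apply/funext => k; apply/eqP; rewrite -subr_eq0.
by move: (congr1 (fun f => f k) h); rewrite /ssub /szero => ->.
Qed.

Lemma inner_addr (x y z : sv) : l2 x -> l2 y -> l2 z ->
  inner z (sadd x y) = inner z x + inner z y.
Proof.
move=> hx hy hz.
rewrite (inner_conj (sadd x y)) //; last exact: l2_add.
by rewrite inner_addl // rmorphD /= -!inner_conj.
Qed.

Lemma inner_scaler (a : C) (x z : sv) : l2 x -> l2 z ->
  inner z (sscale a x) = a^*%C * inner z x.
Proof.
move=> hx hz.
rewrite (inner_conj (sscale a x)) //; last exact: l2_scale.
by rewrite inner_scalel // rmorphM /= -inner_conj.
Qed.

Lemma inner_subl (x y z : sv) : l2 x -> l2 y -> l2 z ->
  inner (ssub x y) z = inner x z - inner y z.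
Proof.
move=> hx hy hz; have hNy := l2_scale (-1) hy.
by rewrite -sadd_scaleN1 inner_addl // inner_scalel // mulN1r addrC.
Qed.

Lemma inner_subr (x y z : sv) : l2 x -> l2 y -> l2 z ->
  inner z (ssub x y) = inner z x - inner z y.
Proof.
move=> hx hy hz; have hNy := l2_scale (-1) hy.
by rewrite -sadd_scaleN1 inner_addr // inner_scaler // rmorphN rmorph1 mulN1r addrC.
Qed.

Lemma inner_self_eq0 (x : sv) : l2 x -> inner x x = 0 -> x = @szero R n.
Proof. by move=> hx; rewrite inner_self // => -[]; exact: l2norm2_eq0. Qed.

Lemma inner0r (z : sv) : inner z (@szero R n) = 0.
Proof.
have zD c : sadd z (sscale c (@szero R n)) = z.
  by apply/funext => k; rewrite /sadd /sscale /szero scaler0 addr0.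
by rewrite innerE !zD !subrr !mul0r.
Qed.

Lemma inner0l (z : sv) : l2 z -> inner (@szero R n) z = 0.
Proof. by move=> hz; rewrite (inner_conj _ _ hz l2_0) inner0r conjc0. Qed.

Lemma orthogonal_l2_eq0 (x : sv) : l2 x -> (forall y, l2 y -> inner y x = 0) ->
  x = @szero R n.
Proof. by move=> hx h; apply: inner_self_eq0 => //; exact: h. Qed.

End InnerProductTheory.

Section Operators.
Context {R : realType}.
Local Notation C := R[i].

Lemma bounded_linear_l2 {m n} {T : seqv R m -> seqv R n} {x} :
  bounded_linear T -> l2 x -> l2 (T x).
Proof. by case=> + _ _; apply. Qed.

Lemma bounded_linear0 {m n} {T : seqv R m -> seqv R n} :
  bounded_linear T -> T (@szero R m) = @szero R n.
Proof.
case=> _ hT _; have := hT 1 _ _ l2_0 l2_0.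
have z0 k : sadd (sscale 1 (@szero R k)) (@szero R k) = @szero R k.
  by apply/funext => j; rewrite /sadd /sscale /szero scaler0 addr0.
rewrite z0 => h; apply/funext => j; apply: (addrI (T (szero R m) j)).
by move: (congr1 (fun f => f j) h); rewrite /sadd /sscale /szero scale1r addr0 => <-.
Qed.

Lemma bounded_linearB {m n} {T : seqv R m -> seqv R n} {x y} :
  bounded_linear T -> l2 x -> l2 y -> T (ssub x y) = ssub (T x) (T y).
Proof. by case=> _ hT _ hx hy; rewrite -!sadd_scaleN1 hT. Qed.

Lemma ge0_conjc (z : C) : 0 <= z -> z^*%C = z.
Proof. by case: z => a b; rewrite lecE /= => /andP[/eqP-> _]; rewrite oppr0. Qed.

Context {n : nat}.
Local Notation sv := (seqv R n).

Lemma inner_expand (c : C) (p q r s : sv) : l2 p -> l2 q -> l2 r -> l2 s ->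
  inner (sadd (sscale c p) q) (sadd (sscale c r) s) =
  c * c^*%C * inner p r + c * inner p s + c^*%C * inner q r + inner q s.
Proof.
move=> hp hq hr hs; have hcp := l2_scale c hp; have hcr := l2_scale c hr.
have hcrs := l2_add hcr hs.
rewrite (inner_addl _ _ _ hcp hq hcrs) (inner_scalel _ _ _ hp hcrs).
rewrite (inner_addr _ _ _ hcr hs hp) (inner_addr _ _ _ hcr hs hq).
rewrite (inner_scaler _ _ _ hr hp) (inner_scaler _ _ _ hr hq).
move: (inner p r) (inner p s) (inner q r) (inner q s) => a b d e.
by ring.
Qed.

Ltac generalize_inner := repeat match goal with
  | |- context [ inner ?a ?b ] => let z := fresh "z" in generalize (inner a b); intro z end.

Lemma conjc_i : ('i%C : C)^*%C = - 'i%C.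
Proof. by apply: cplx_eq => /=; rewrite ?oppr0. Qed.

Lemma polar_eq0 (u v : C) : (forall c : C, c * u + c^*%C * v = 0) -> v = 0.
Proof.
move=> polar; move: (polar 1) (polar 'i%C); rewrite conjc1 conjc_i !mul1r => h1 hi.
have hu : u = - v by apply/eqP; rewrite -addr_eq0 h1.
have : ('i%C * 2%:R) * v = 0 by rewrite -[RHS]oppr0 -[in RHS]hi hu; ring.
move/eqP; rewrite mulf_eq0 => /orP[|/eqP //].
rewrite mulf_eq0 pnatr_eq0 orbF => /eqP /(congr1 (@complex.Im R)) /= /eqP.
by rewrite oner_eq0.
Qed.

(* A positive operator is symmetric: the form [inner (T x) y - inner x (T y)]
   vanishes on the diagonal, hence everywhere by polarization. *)
Lemma pos_op_symmetric {T : sv -> sv} : bounded_linear T ->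
  (forall x, l2 x -> 0 <= inner (T x) x) ->
  forall x y, l2 x -> l2 y -> inner (T x) y = inner x (T y).
Proof.
move=> hT hpos x y hx hy.
have diag z : l2 z -> inner (T z) z = inner z (T z).
  move=> hz; have hTz := bounded_linear_l2 hT hz.
  by rewrite (inner_conj _ _ hTz hz) ge0_conjc //; exact: hpos z hz.
have hTx := bounded_linear_l2 hT hx; have hTy := bounded_linear_l2 hT hy.
have polar c :
    c * (inner (T y) x - inner y (T x)) + c^*%C * (inner (T x) y - inner x (T y)) = 0.
  have hcy := l2_scale c hy; have hz := l2_add hcy hx.
  have lin : T (sadd (sscale c y) x) = sadd (sscale c (T y)) (T x).
    by case: hT => _ hlin _; rewrite hlin.
  move: (diag _ hz).
  rewrite lin (inner_expand c _ _ _ _ hTy hTx hy hx).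
  rewrite (inner_expand c _ _ _ _ hy hx hTy hTx) (diag _ hx) (diag _ hy).
  by move: (c^*%C); generalize_inner => cc /eqP; rewrite -subr_eq0 => /eqP <-; ring.
by apply/eqP; rewrite -subr_eq0; apply/eqP; exact: polar_eq0 polar.
Qed.

End Operators.

Section RangeProjection.
Context {R : realType}.

Lemma range_orth_proj {m n} (T : seqv R m -> seqv R n) (Ts : seqv R n -> seqv R m)
    (K : seqv R m -> seqv R m) :
  maps_l2 T -> maps_l2 Ts -> maps_l2 K ->
  (forall x y, l2 x -> l2 y -> inner (T x) y = inner x (Ts y)) ->
  (forall x, l2 x -> Ts (T (K (Ts x))) = Ts x) ->
  is_orth_proj [set y | exists2 x, l2 x & y = T x] (fun x => T (K (Ts x))).
Proof.
move=> hT hTs hK hadj hid x hx; have hKx := hK _ (hTs _ hx).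
split; first by exists (K (Ts x)).
move=> _ [z hz ->]; have hTz := hT _ hz.
have adjT w : l2 w -> inner w (T z) = inner (Ts w) z.
  move=> hw; rewrite (inner_conj _ _ hTz hw) (hadj _ _ hz hw).
  exact: esym (inner_conj _ _ hz (hTs _ hw)).
rewrite (inner_subl _ _ _ hx (hT _ hKx) hTz) (adjT _ hx) (adjT _ (hT _ hKx)).
by rewrite (hid _ hx) subrr.
Qed.

Lemma l2norm2_le_of_inner_eqN {n} (d e : seqv R n) : l2 d -> l2 e ->
  inner d e = - inner d d -> l2norm2 d <= l2norm2 e.
Proof.
move=> hd he hde; have hsum := l2_add hd he.
have hed : inner e d = - inner d d.
  by rewrite (inner_conj _ _ hd he) hde rmorphN /= (inner_self _ hd) conjc_real.
have : inner (sadd d e) (sadd d e) = (l2norm2 e - l2norm2 d)%:C%C.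
  rewrite (inner_addl _ _ _ hd he hsum) !(inner_addr _ _ _ hd he) //.
  by rewrite hde hed !inner_self // raddfB /=; ring.
rewrite (inner_self _ hsum) => /complexI h.
by rewrite -subr_ge0 -h l2norm2_ge0.
Qed.

Lemma orth_proj_l2closed {n} (F : set (seqv R n)) P :
  (forall m, F m -> l2 m) -> is_orth_proj F P -> l2closed F.
Proof.
move=> Fl2 hP u x hu hx hcvg; have [hPx ho] := hP x hx; have hPxl2 := Fl2 _ hPx.
have hd : l2 (ssub x (P x)) by exact: l2_sub.
have bound k : l2norm2 (ssub x (P x)) <= l2norm2 (ssub (u k) x).
  have huk := Fl2 _ (hu k); apply: (l2norm2_le_of_inner_eqN _ _ hd (l2_sub huk hx)).
  rewrite (inner_subr _ _ _ huk hx hd) (ho _ (hu k)) sub0r.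
  by rewrite (inner_subr _ _ _ hx hPxl2 hd) (ho _ hPx) subr0.
have hsq : (fun k => l2norm (ssub (u k) x) * l2norm (ssub (u k) x)) @ \oo --> (0 : R).
  by rewrite -(mulr0 0); apply: cvgM.
have : l2norm2 (ssub x (P x)) <= 0.
  rewrite -(cvg_lim _ hsq) //; apply: limr_ge; first by apply/cvg_ex; exists 0.
  apply: nearW => k; rewrite /l2norm -expr2 sqr_sqrtr; first exact: bound.
  by apply: l2norm2_ge0; apply: l2_sub => //; exact: Fl2.
move=> hle; have h0 : l2norm2 (ssub x (P x)) = 0.
  by apply/eqP; rewrite eq_le hle l2norm2_ge0.
by move: (l2norm2_eq0 _ hd h0) => /ssub_eq0 ->.
Qed.

End RangeProjection.

Section OrthogonalProjection.
Context {R : realType} {n : nat}.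
Local Notation C := R[i].
Local Notation sv := (seqv R n).
Context {M : set sv} {P : sv -> sv}.
Hypotheses (hM : Defs.subspace M) (hP : is_orth_proj M P).

Let Ml2 {m : sv} : M m -> l2 m. Proof. by have [hl _ _] := hM; exact: hl. Qed.

Lemma subspace_sub {a b} : M a -> M b -> M (ssub a b).
Proof. by have [_ _ hlin] := hM; move=> ha hb; rewrite -sadd_scaleN1; exact: hlin. Qed.

Lemma orth_proj_l2 {x} : l2 x -> l2 (P x).
Proof. by move=> hx; apply: Ml2; case: (hP x hx). Qed.

Lemma orth_proj_eq0 y : l2 y -> (forall m, M m -> inner y m = 0) -> P y = @szero R n.
Proof.
move=> hy hperp; have [hPy ho] := hP y hy; have hPyl2 := Ml2 hPy.
apply: inner_self_eq0 => //.
move: (ho _ hPy); rewrite (inner_subl _ _ _ hy hPyl2 hPyl2) hperp // sub0r.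
by move/eqP; rewrite oppr_eq0 => /eqP.
Qed.

Lemma orth_proj0 : P (@szero R n) = @szero R n.
Proof. by apply: orth_proj_eq0 l2_0 _ => m /Ml2; exact: inner0l. Qed.

Lemma orth_proj_id m : M m -> P m = m.
Proof.
move=> hm; have hml := Ml2 hm; have [hPm ho] := hP m hml.
apply/esym/ssub_eq0/inner_self_eq0; first by apply: l2_sub => //; exact: Ml2.
exact: ho (subspace_sub hm hPm).
Qed.

Lemma orth_proj_symmetric x y : l2 x -> l2 y -> inner (P x) y = inner x (P y).
Proof.
move=> hx hy; have [hPx ox] := hP x hx; have [hPy oy] := hP y hy.
have hPxl2 := Ml2 hPx; have hPyl2 := Ml2 hPy.
move: (ox _ hPy) (oy _ hPx).
rewrite (inner_subl _ _ _ hx hPxl2 hPyl2) (inner_subl _ _ _ hy hPyl2 hPxl2).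
move=> /subr0_eq -> /subr0_eq e.
rewrite (inner_conj _ _ hy hPxl2) e.
exact: esym (inner_conj _ _ hPyl2 hPxl2).
Qed.

Lemma orth_proj_mem z : l2 z ->
  (forall y, l2 y -> (forall m, M m -> inner y m = 0) -> inner z y = 0) -> M z.
Proof.
move=> hz h; have [hPz ho] := hP z hz; have hPzl2 := Ml2 hPz.
have hr : l2 (ssub z (P z)) by exact: l2_sub.
suff /ssub_eq0 -> : ssub z (P z) = @szero R n by [].
apply: inner_self_eq0 => //.
rewrite (inner_subr _ _ _ hz hPzl2 hr) (ho _ hPz) (inner_conj _ _ hz hr).
by rewrite (h _ hr ho) conjc0 subr0.
Qed.

Lemma invariant_of_scalar_on_orth (T : sv -> sv) (c : C) : maps_l2 T ->
  (forall x y, l2 x -> l2 y -> inner (T x) y = inner x (T y)) ->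
  (forall y, l2 y -> (forall m, M m -> inner y m = 0) -> T y = sscale c y) ->
  forall m, M m -> M (T m).
Proof.
move=> hTl2 hsym hscal m hm; have hml := Ml2 hm.
apply: orth_proj_mem (hTl2 _ hml) _ => y hy hperp.
rewrite (hsym _ _ hml hy) (hscal _ hy hperp) (inner_scaler _ _ _ hy hml).
by rewrite (inner_conj _ _ hy hml) (hperp _ hm) conjc0 mulr0.
Qed.

(* If [A^2] leaves [M] invariant, so does [A^-2]: the component [d] of [A^-2 v]
   orthogonal to [M] satisfies [|A d|^2 = <A^2 d, d> = 0], as [A^2 d] is in [M]. *)
Lemma inverse_sq_invariant {A E : sv -> sv} : bounded_linear A ->
  (forall x y, l2 x -> l2 y -> inner (A x) y = inner x (A y)) -> is_inverse A E ->
  (forall u, M u -> M (A (A u))) -> forall v, M v -> M (E (E v)).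
Proof.
move=> hA hsym [hE hinv] hAA v hv; have hvl2 := Ml2 hv.
have hEv := bounded_linear_l2 hE hvl2; have hy := bounded_linear_l2 hE hEv.
have [hPy ho] := hP _ hy; have hPyl2 := Ml2 hPy.
have hd : l2 (ssub (E (E v)) (P (E (E v)))) by exact: l2_sub.
have hAd := bounded_linear_l2 hA hd.
have hAAd : M (A (A (ssub (E (E v)) (P (E (E v)))))).
  rewrite (bounded_linearB hA hy hPyl2) (bounded_linearB hA (bounded_linear_l2 hA hy)
    (bounded_linear_l2 hA hPyl2)) (hinv _ hEv).2 (hinv _ hvl2).2.
  exact: subspace_sub hv (hAA _ hPy).
have /inner_self_eq0 : inner (A (ssub (E (E v)) (P (E (E v)))))
                             (A (ssub (E (E v)) (P (E (E v))))) = 0.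
  by rewrite -(hsym _ _ hAd hd) (inner_conj _ _ hd (Ml2 hAAd)) (ho _ hAAd) conjc0.
move=> /(_ hAd) /(congr1 E); rewrite (hinv _ hd).1 (bounded_linear0 hE) => /ssub_eq0 ->.
exact: hPy.
Qed.

Lemma adjoint_fshift_proj {Qs : sv -> sv} :
  is_adjoint (fun x => fshift (P x)) Qs -> forall b, l2 b -> Qs b = P (bshift b).
Proof.
move=> [hQs hadj] b hb; have hQb := hQs _ hb; have [hbs _] := l2_bshift hb.
have hPbs := orth_proj_l2 hbs.
apply/ssub_eq0/orthogonal_l2_eq0; first exact: l2_sub.
move=> a ha; have hPa := orth_proj_l2 ha.
rewrite (inner_subr _ _ _ hQb hPbs ha) -(hadj _ _ ha hb) (inner_fshift _ _ hPa hb).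
by rewrite (orth_proj_symmetric _ _ ha hbs) subrr.
Qed.

Lemma adjoint_fshift_proj_mem {Qs : sv -> sv} :
  is_adjoint (fun x => fshift (P x)) Qs -> forall b, l2 b -> M (Qs b).
Proof.
move=> hQs b hb; rewrite (adjoint_fshift_proj hQs _ hb).
by have [hbs _] := l2_bshift hb; case: (hP _ hbs).
Qed.

Lemma sqrt_compression_invariant (A D : sv -> sv) (c : R) : A (@szero R n) = @szero R n ->
  is_pos_sqrt D (fun x => ssub (sscale c%:C%C x) (P (A (P x)))) ->
  forall m, M m -> M (D (D m)).
Proof.
move=> A0 [hD Dpos Dsq]; have Dsym := pos_op_symmetric hD Dpos.
have Dl2 x : l2 x -> l2 (D x) := bounded_linear_l2 hD.
apply: (invariant_of_scalar_on_orth _ c%:C%C) => [x /Dl2 /Dl2 //|x y hx hy|y hy hperp].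
  by rewrite (Dsym _ _ (Dl2 _ hx) hy) (Dsym _ _ hx (Dl2 _ hy)).
rewrite (Dsq _ hy) (orth_proj_eq0 _ hy hperp) A0 orth_proj0.
by apply/funext => k; rewrite /ssub /szero subr0.
Qed.

Section ShiftCompression.
Context {Qs D D0 E : sv -> sv}.
Hypotheses (hQs : is_adjoint (fun x => fshift (P x)) Qs)
  (hD : bounded_linear D) (Dpos : forall x, l2 x -> 0 <= inner (D x) x)
  (hD0 : bounded_linear D0) (D0pos : forall x, l2 x -> 0 <= inner (D0 x) x)
  (hE : is_inverse D0 E)
  (D0E : forall u, l2 u -> D0 (D0 u) = bshift (D (D (fshift u))))
  (D0M : forall u, M u -> M (D0 (D0 u))).

Let Dl2 x : l2 x -> l2 (D x) := bounded_linear_l2 hD.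
Let El2 x : l2 x -> l2 (E x) := bounded_linear_l2 hE.1.

Lemma shift_compressionK v : M v -> Qs (D (D (fshift (P (E (E v)))))) = v.
Proof.
move=> hv; have hvl2 := Ml2 hv; have hEv := El2 _ hvl2; have hy := El2 _ hEv.
have hy_mem := inverse_sq_invariant hD0 (pos_op_symmetric hD0 D0pos) hE D0M _ hv.
rewrite (orth_proj_id _ hy_mem) (adjoint_fshift_proj hQs _ (Dl2 _ (Dl2 _ (l2_fshift hy)))).
by rewrite -(D0E _ hy) (hE.2 _ hEv).2 (hE.2 _ hvl2).2 (orth_proj_id _ hv).
Qed.

Lemma shift_compression_orth_proj :
  is_orth_proj [set y | exists2 x, l2 x & y = D (fshift (P x))]
    (fun x => D (fshift (P (E (E (Qs (D x))))))).
Proof.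
apply: (range_orth_proj (fun x => D (fshift (P x))) (fun x => Qs (D x)) (fun x => E (E x))).
- by move=> x /orth_proj_l2 /l2_fshift /Dl2.
- by move=> x /Dl2; exact: hQs.1.
- by move=> x /El2 /El2.
- move=> x y hx hy; rewrite (pos_op_symmetric hD Dpos _ _ (l2_fshift (orth_proj_l2 hx)) hy).
  exact: hQs.2 _ _ hx (Dl2 _ hy).
- by move=> x hx; rewrite (shift_compressionK _ (adjoint_fshift_proj_mem hQs _ (Dl2 _ hx))).
Qed.

End ShiftCompression.

End OrthogonalProjection.

Section ShiftInvariance.
Context {R : realType} {n : nat}.
Local Notation sv := (seqv R n).
Context {M : set sv}.
Hypothesis hM : Defs.subspace M.

Lemma subspace_bshift : Defs.subspace (@bshift R n @` M).
Proof.
have [Ml2 M0 Mlin] := hM; split.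
- by move=> _ [m hm <-]; have [] := l2_bshift (Ml2 _ hm).
- by exists (@szero R n).
- by move=> a _ _ [x hx <-] [y hy <-]; exists (sadd (sscale a x) y); first exact: Mlin.
Qed.

Lemma fshift_bshift_mem : (forall x, l2 x -> bshift x = @szero R n -> M x) ->
  forall m, M m -> M (fshift (bshift m)).
Proof.
have [Ml2 _ Mlin] := hM => kerM m hm; have hml := Ml2 _ hm.
have he : l2 (ssub m (fshift (bshift m))).
  by apply: l2_sub => //; apply: l2_fshift; have [] := l2_bshift hml.
have Me : M (ssub m (fshift (bshift m))).
  apply: (kerM _ he); apply/funext => k.
  by rewrite /bshift /ssub /fshift /szero /= subrr.
have -> : fshift (bshift m) = ssub m (ssub m (fshift (bshift m))).
  by apply/funext => -[|k]; rewrite /ssub /fshift /bshift /= ?subr0 ?subrr ?subr0.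
by rewrite -sadd_scaleN1; exact: Mlin.
Qed.

Lemma bshift_image_invariant (T : sv -> sv) :
  (forall x, l2 x -> bshift x = @szero R n -> M x) -> (forall m, M m -> M (T m)) ->
  forall u, (@bshift R n @` M) u -> (@bshift R n @` M) (bshift (T (fshift u))).
Proof.
move=> kerM TM _ [m hm <-]; exists (T (fshift (bshift m))) => //.
exact/TM/(fshift_bshift_mem kerM).
Qed.

End ShiftInvariance.

Lemma hankel0 {R : realType} {p q} {G : R -> 'M[R[i]]_(q, p)} {H} :
  is_hankel G H -> H (@szero R p) = @szero R q.
Proof.
move=> hH; apply/funext => k; have := hH _ l2_0 k.
have -> : (fun N => vnorm2 (\sum_(j < N) fcoef G (- (k + j + 1)%N%:Z) *m @szero R p j
            - H (@szero R p) k)) = fun=> vnorm2 (- H (@szero R p) k).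
  by apply/funext => N; rewrite big1 ?sub0r // => j _; exact: mulmx0.
move=> /(cvg_lim (@Rhausdorff R)); rewrite (cvg_lim (@Rhausdorff R) (cvg_cst _)) => h.
by apply/eqP; rewrite -oppr_eq0; apply/eqP; exact: vnorm2_eq0.
Qed.

Lemma adjoint0 {R : realType} {m n} {T : seqv R m -> seqv R n} {Ts} :
  is_adjoint T Ts -> Ts (@szero R n) = @szero R m.
Proof.
move=> [hTs hadj]; apply: orthogonal_l2_eq0 (hTs _ l2_0) _ => a ha.
by rewrite -(hadj _ _ ha l2_0) inner0r.
Qed.

Theorem lemma4p3 (R : realType) (p q : nat) (G : R -> 'M[R[i]]_(q, p))
  (H : seqv R p -> seqv R q) (Hs : seqv R q -> seqv R p)
  (M : set (seqv R p)) (PM RM : seqv R p -> seqv R p)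
  (Qs D D0 E : seqv R p -> seqv R p) :
  Linf G ->
  is_hankel G H ->                       (* H f = P_-(G f) *)
  is_adjoint H Hs ->                     (* Hs = H^* *)
  closed_subspace M ->
  (forall x, M x -> M (bshift x)) ->     (* S^* M ⊂ M *)
  (forall x, l2 x -> bshift x = @szero R p -> M x) ->  (* ker S^* ⊂ M *)
  is_orth_proj M PM ->                   (* PM = P_M *)
  is_orth_proj (@bshift R p @` M) RM ->       (* RM = R_M *)
  is_adjoint (fun x => fshift (RM x)) Qs -> (* Qs = Q_M^*, Q_M = S R_M *)
  let g := opnorm_on M H in              (* gamma_M *)
  is_pos_sqrt D
    (fun x => ssub (sscale (g ^+ 2)%:C%C x) (PM (Hs (H (PM x))))) ->
  is_pos_sqrt D0
    (fun x => ssub (sscale (g ^+ 2)%:C%C x)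
                   (bshift (PM (Hs (H (PM (fshift x))))))) ->
  is_inverse D0 E ->                     (* D°_M invertible, E = (D°_M)^{-1} *)
  let F := [set y | exists2 x, l2 x & y = D (fshift (RM x))] in
  l2closed F /\
  is_orth_proj F (fun x => D (fshift (RM (E (E (Qs (D x))))))).
Proof.
move=> _ hH hHs [hM _] _ kerM hPM hRM hQs g hD hD0 hE F.
have hN := subspace_bshift hM.
have HsH0 : Hs (H (@szero R p)) = @szero R p by rewrite (hankel0 hH) (adjoint0 hHs).
have DDM := sqrt_compression_invariant hM hPM (fun x => Hs (H x)) D _ HsH0 hD.
have [hDb Dpos Dsq] := hD; have [hD0b D0pos D0sq] := hD0.
have D0E u : l2 u -> D0 (D0 u) = bshift (D (D (fshift u))).
  by move=> hu; rewrite (D0sq _ hu) (Dsq _ (l2_fshift hu)).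
have D0N u : (@bshift R p @` M) u -> (@bshift R p @` M) (D0 (D0 u)).
  move=> hu; have [Nl2 _ _] := hN; rewrite (D0E _ (Nl2 _ hu)).
  exact: bshift_image_invariant kerM DDM _ hu.
have hproj := shift_compression_orth_proj hN hRM hQs hDb Dpos hD0b D0pos hE D0E D0N.
split; last exact: hproj.
apply: orth_proj_l2closed hproj => _ [x hx ->].
exact/(bounded_linear_l2 hDb)/l2_fshift/(orth_proj_l2 hN hRM).
Qed.
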